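(* In the hierarchical partition construction described in the context, for every level $j$ and every $S\in\mathcal S_j$, the number of sets $S'\in\mathcal S_j$ (including $S$ itself) that $S$ knows is at most $\lambda^{3+\eta}$. Equivalently, $\bigcup\{B_{r_j}(v):v\in S\}$ intersects at most $\lambda^{3+\eta}$ sets of $\mathcal S_j$.
   Context: Let $(V,d)$ be a finite metric space with $|V|\ge 2$ which is doubling with constant $\lambda$: for every $v\in V$ and $r>0$ the open ball $B_{2r}(v)=\{u:d(u,v)<2r\}$ is contained in the union of at most $\lambda$ open balls $B_r(w)$, $w\in V$. Fix an integer $\eta\ge2$ and a real $\tau$ with $1+\frac{1}{2^{\eta-1}-1}\le\tau\le 2^{\eta}$. For $L\subseteq V$ and $r>0$, a greedy partition of $L$ with parameter $r$ is obtained by: set $L_0=L$; while $L_i\ne\emptyset$ choose any $v_i\in L_i$, let $P_i=\{u\in L_i: d(u,v_i)<2^{-\eta-1}r\}$ with leader $v_i$, and set $L_{i+1}=L_i\setminus P_i$. Hierarchical partition construction: choose $r_0$ with $0<r_0<\min_{u\ne v}d(u,v)$ and put $r_j=\tau^j r_0$. Let $\mathcal S_0=\{\{v\}:v\in V\}$, the leader of $\{v\}$ being $v$. While $\mathcal S_j$ has more than one element: let $L_j$ be the set of leaders of the sets in $\mathcal S_j$, let $\mathcal S'_{j+1}$ be a greedy partition of $L_j$ with parameter $2r_{j+1}$, and let $\mathcal S_{j+1}$ consist, for each $P\in\mathcal S'_{j+1}$, of the set $\bigcup\{S\in\mathcal S_j:\mathrm{leader}(S)\in P\}$, whose leader is defined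 to be the leader of $P$. Each $\mathcal S_j$ is a partition of $V$. For $S,S'\in\mathcal S_j$, $S$ knows $S'$ (at level $j$) if there are $v\in S$, $u\in S'$ with $d(v,u)<r_j$; $B_r(v)$ denotes the open ball $\{u\in V:d(u,v)<r\}$. *)

From HB Require Import structures.
From mathcomp Require Import all_boot all_order all_algebra.
Set Implicit Arguments. Unset Strict Implicit. Unset Printing Implicit Defensive.
Import Order.TTheory GRing.Theory Num.Theory.
Local Open Scope ring_scope.

Section Defs.
Variables (R : realFieldType) (V : finType) (d : V -> V -> R).

Definition is_metric : Prop :=
  [/\ forall x y, d x y = 0 <-> x = y,
      forall x y, d x y = d y x &
      forall x y z, d x z <= d x y + d y z].

Definition ball (v : V) (r : R) : {set V} := [set u | d u v < r].

Definition doubling (lam : nat) : Prop :=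
  forall (v : V) (r : R), 0 < r ->
    exists W : {set V}, (#|W| <= lam)%N /\
      ball v (2 * r) \subset \bigcup_(w in W) ball w r.

(* Greedy partition of L with radius rad (= 2^{-eta-1} r), driven by the
   sequence s of chosen leaders v_0, v_1, ...; output: list of (leader, block). *)
Fixpoint greedy_blocks (L : {set V}) (rad : R) (s : seq V) : seq (V * {set V}) :=
  match s with
  | [::] => [::]
  | v :: s' => let P := [set u in L | d u v < rad] in
               (v, P) :: greedy_blocks (L :\: P) rad s'
  end.

Fixpoint valid_greedy (L : {set V}) (rad : R) (s : seq V) : Prop :=
  match s with
  | [::] => L = set0
  | v :: s' => v \in L /\ valid_greedy (L :\: [set u in L | d u v < rad]) rad s'
  end.

(* a level of the hierarchy: list of (leader, set) pairs *)
Definition level := seq (V * {set V}).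

Definition leaders (S : level) : {set V} := [set p.1 | p in S].

Definition level0 : level := [seq (v, [set v]) | v <- enum V].

Definition next_level (S : level) (rad : R) (s : seq V) : level :=
  map (fun q : V * {set V} => (q.1, \bigcup_(p <- S | p.1 \in q.2) p.2))
      (greedy_blocks (leaders S) rad s).

(* H is a run of the hierarchical construction with parameters eta, tau, r0:
   H 0 = S_0, and while H j has more than one element, H (j+1) is obtained
   by a legal greedy partition of its leaders with parameter 2 r_{j+1}. *)
Definition hier_run (eta : nat) (tau r0 : R) (H : nat -> level) : Prop :=
  H 0%N = level0 /\
  forall j : nat, (1 < size (H j))%N ->
    exists s : seq V,
      valid_greedy (leaders (H j)) ((2 * (tau ^+ j.+1 * r0)) / 2 ^+ eta.+1) s /\
      H j.+1 = next_level (H j) ((2 * (tau ^+ j.+1 * r0)) / 2 ^+ eta.+1) s.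

Definition knows (rj : R) (S S' : {set V}) : bool :=
  [exists v in S, exists u in S', d v u < rj].

End Defs.

From HB Require Import structures.
From mathcomp Require Import all_boot all_order all_algebra.
From mathcomp Require Import ring lra.
Import Order.TTheory GRing.Theory Num.Theory.
Local Open Scope ring_scope.
Set Implicit Arguments. Unset Strict Implicit.

(* Write a = r_j = tau^j r0 and rho = a / 2^(eta+1).  The proof is a packing
   argument against the doubling covering bound.
   - Invariant (spread_hier_run): at level j the leaders are pairwise at
     distance >= 2 rho (they were chosen by a greedy partition of radius
     2 r_j / 2^(eta+1)), and every set lies within a/2 of its leader.  Merging
     adds the greedy radius to the set radius; the lower bound on tau is
     exactly what keeps the new radius below r_(j+1)/2 (radius_step).
   - Locality (known_leader_near): if S knows S' at radius a, then the leader
     of S' is within a/2 + a + a/2 = 2a = 2^(eta+2) rho of the leader of S.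
   - Counting (count_known_le): by doubling, the ball of radius 2^(eta+2) rho
     is covered by lam^(eta+2) balls of radius rho (cover_ball); each contains
     at most one (2 rho)-separated leader (packing).
   Hence S knows at most lam^(eta+2) <= lam^(eta+3) sets. *)

Section Scales.
Variables (R : realFieldType) (eta : nat) (tau : R).
Hypothesis eta_ge2 : (2 <= eta)%N.
Hypothesis tau_ge : 1 + 1 / (2 ^+ eta.-1 - 1) <= tau.

(* M = 2^(eta-1) is the quantity the lower bound on tau is expressed in. *)
Let M : R := 2 ^+ eta.-1.

Lemma pow_pred_ge2 : 2 <= M.
Proof.
rewrite /M; case: eta eta_ge2 => [|[|e]] // _ /=.
by rewrite exprS ler_peMr // exprn_ege1 // ler1n.
Qed.

Lemma pow_succ_eq : (2 : R) ^+ eta.+1 = 4 * M.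
Proof.
rewrite /M; case: eta eta_ge2 => [|e] // _ /=.
by rewrite !exprS mulrA -natrM.
Qed.

(* The lower bound on tau, solved for tau: tau <= (tau - 1) 2^(eta-1). *)
Lemma tau_le_scaled : tau <= (tau - 1) * M.
Proof.
have M1 : 0 < M - 1 by rewrite subr_gt0 (lt_le_trans _ pow_pred_ge2) // ltr1n.
have : 1 / (M - 1) <= tau - 1 by rewrite lerBrDl.
by rewrite ler_pdivrMr // mulrBr mulr1 lerBrDr addrC subrK.
Qed.

Lemma tau_gt1 : 1 < tau.
Proof.
have M1 : 0 < M - 1 by rewrite subr_gt0 (lt_le_trans _ pow_pred_ge2) // ltr1n.
by apply: lt_le_trans tau_ge; rewrite ltrDl divr_gt0.
Qed.

(* Radius recursion: a set of radius a/2 at scale a, merged by a greedy step of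
   radius 2(a tau)/2^(eta+1), has radius at most (a tau)/2, the next scale. *)
Lemma radius_step (a : R) : 0 <= a ->
  a / 2 + 2 * (a * tau) / 2 ^+ eta.+1 <= a * tau / 2.
Proof.
move=> a_ge0; have M_gt0 : 0 < M by apply: lt_le_trans pow_pred_ge2.
have shrink : a * tau / M <= a * tau - a.
  rewrite ler_pdivrMr // mulrBl -[a * tau * M]mulrA -mulrBr.
  have -> : tau * M - M = (tau - 1) * M by rewrite mulrBl mul1r.
  by rewrite ler_wpM2l // tau_le_scaled.
have -> : 2 * (a * tau) / 2 ^+ eta.+1 = a * tau / M / 2.
  by rewrite pow_succ_eq; field; rewrite gt_eqF.
lra.
Qed.
End Scales.

Section Metric.
Variables (R : realFieldType) (V : finType) (d : V -> V -> R).
Hypothesis d_metric : is_metric d.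

Lemma d_refl x : d x x = 0. Proof. by case: d_metric => h _ _; apply/h. Qed.
Lemma d_sym x y : d x y = d y x. Proof. by case: d_metric. Qed.
Lemma d_tri x y z : d x z <= d x y + d y z. Proof. by case: d_metric. Qed.

(* Packing: points pairwise at distance >= 2 rho, each within rho of some
   point of W, are at most #|W| many (distinct points use distinct centres). *)
Lemma packing (W : {set V}) (rho : R) (A : seq V) :
  uniq A ->
  (forall x, x \in A -> exists2 w, w \in W & d x w < rho) ->
  (forall x y, x \in A -> y \in A -> x != y -> 2 * rho <= d x y) ->
  (size A <= #|W|)%N.
Proof.
move=> uniqA covered separated.
pose centre x := odflt x [pick w in W | d x w < rho].
have centreP x : x \in A -> centre x \in W /\ d x (centre x) < rho.
  move=> /covered [w wW dxw]; rewrite /centre.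
  by case: pickP => [w' /andP [] //|/(_ w)]; rewrite wW dxw.
have centre_inj : {in A &, injective centre}.
  move=> x y xA yA same; apply/eqP/negPn/negP => /(separated x y xA yA).
  case: (centreP x xA) (centreP y yA) => _ dx [_ dy].
  rewrite same in dx; rewrite d_sym in dy; rewrite leNgt => /negP; apply.
  by apply: le_lt_trans (d_tri x (centre y) y) _; rewrite mulr_natl mulr2n ltrD.
rewrite -(card_uniqP uniqA) -(card_in_imset centre_inj).
by apply/subset_leq_card/subsetP => _ /imsetP [x xA ->]; case: (centreP x xA).
Qed.

Variable lam : nat.
Hypothesis d_doubling : doubling d lam.

Lemma cover_neighbourhood (s : seq V) (r : R) : 0 < r ->
  exists W : {set V}, (#|W| <= lam * size s)%N /\
    forall x, (exists2 w, w \in s & d x w < 2 * r) ->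
      exists2 w', w' \in W & d x w' < r.
Proof.
move=> r_gt0; elim: s => [|v s [W [cardW coverW]]].
  by exists set0; rewrite cards0; split => // x [].
have [W' [cardW' coverW']] := d_doubling v r_gt0.
exists (W :|: W'); split.
  by rewrite mulnS addnC (leq_trans (leq_card_setU _ _)) ?leq_add.
move=> x [w]; rewrite inE => /orP [/eqP -> dxv | ws dxw].
  have : x \in ball d v (2 * r) by rewrite inE.
  move/(subsetP coverW')/bigcupP => [w' w'W']; rewrite inE => dxw'.
  by exists w' => //; rewrite inE w'W' orbT.
have [w' w'W dxw'] := coverW x (ex_intro2 _ _ w ws dxw).
by exists w' => //; rewrite inE w'W.
Qed.

Lemma cover_ball k : forall v (r : R), 0 < r ->
  exists W : {set V}, (#|W| <= lam ^ k)%N /\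
    forall x, d x v < 2 ^+ k * r -> exists2 w, w \in W & d x w < r.
Proof.
elim: k => [|k IH] v r r_gt0.
  exists [set v]; rewrite cards1 expn0; split => // x; rewrite mul1r => dxv.
  by exists v; rewrite ?inE.
have [W [cardW coverW]] := IH v (2 * r) (mulr_gt0 (ltr0Sn _ 1) r_gt0).
have [W' [cardW' coverW']] := cover_neighbourhood (enum W) r_gt0.
exists W'; split.
  by rewrite (leq_trans cardW') // -cardE expnS leq_mul2l cardW orbT.
move=> x dxv; apply: coverW'.
have [w wW dxw] := coverW x ltac:(by rewrite mulrA -exprSr).
by exists w; rewrite ?mem_enum.
Qed.
End Metric.

Section Greedy.
Variables (R : realFieldType) (V : finType) (d : V -> V -> R).
Hypothesis d_metric : is_metric d.

Lemma greedy_leaders L g s : map fst (greedy_blocks d L g s) = s.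
Proof. by elim: s L => //= v s IH L; rewrite IH. Qed.

Lemma greedy_block_radius L g s c : c \in greedy_blocks d L g s ->
  forall u, u \in c.2 -> d u c.1 < g.
Proof.
elim: s L => //= v s IH L; rewrite inE => /orP [/eqP -> u | /IH //].
by rewrite inE => /andP [].
Qed.

(* A legal greedy run picks distinct points of L, pairwise at distance >= g:
   each later leader survived the removal of the g-ball of every earlier one. *)
Lemma greedy_leaders_separated L g s : 0 < g -> valid_greedy d L g s ->
  [/\ {subset s <= L}, uniq s &
      forall a b, a \in s -> b \in s -> a != b -> g <= d a b].
Proof.
move=> g_gt0; elim: s L => //= v s IH L [vL /IH [sub uniq_s sep]].
have far a : a \in s -> g <= d a v.
  by move/sub; rewrite !inE => /andP [+ aL]; rewrite aL /= -leNgt.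
have v_notin : v \notin s by apply/negP => /far; rewrite (d_refl d_metric) leNgt g_gt0.
split; last 1 first.
- move=> a b; rewrite !inE => /orP [/eqP -> | as_] /orP [/eqP -> | bs].
  + by rewrite eqxx.
  + by rewrite (d_sym d_metric) far.
  + by rewrite far.
  + exact: sep.
- by move=> x; rewrite inE => /orP [/eqP -> // | /sub]; rewrite inE => /andP [].
- by rewrite v_notin.
Qed.

Lemma next_level_leaders S g s : map fst (next_level d S g s) = s.
Proof.
rewrite /next_level -map_comp -[RHS](greedy_leaders (leaders S) g s).
exact: eq_map.
Qed.

Definition spread_level (S : level V) (sep rad : R) : Prop :=
  [/\ uniq (map fst S),
      forall q1 q2, q1 \in S -> q2 \in S -> q1.1 != q2.1 -> sep <= d q1.1 q2.1 &
      forall q, q \in S -> forall x, x \in q.2 -> d x q.1 <= rad].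

Lemma spread_level0 sep rad : (forall u v, u != v -> sep <= d u v) -> 0 <= rad ->
  spread_level (level0 V) sep rad.
Proof.
move=> sepV rad_ge0; split.
- by rewrite /level0 -map_comp map_id enum_uniq.
- by move=> _ _ /mapP [u _ ->] /mapP [v _ ->] /=; apply: sepV.
- by move=> _ /mapP [v _ ->] x /=; rewrite inE => /eqP ->; rewrite (d_refl d_metric).
Qed.

Lemma spread_next_level S sep rad rad' g s : spread_level S sep rad -> 0 < g ->
  valid_greedy d (leaders S) g s -> rad + g <= rad' ->
  spread_level (next_level d S g s) g rad'.
Proof.
move=> [_ _ near] g_gt0 /(greedy_leaders_separated g_gt0) [_ uniq_s sep_s] rad_le.
have lead q : q \in next_level d S g s -> q.1 \in s.
  by rewrite -{2}(next_level_leaders S g s); apply: map_f.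
split; first by rewrite next_level_leaders.
  by move=> q1 q2 /lead q1s /lead q2s; apply: sep_s.
move=> _ /mapP [c cS ->] x /=; rewrite big_seq_cond.
apply: (big_ind (fun X : {set V} => x \in X -> d x c.1 <= rad')) => //.
- by rewrite inE.
- by move=> X Y xX xY; rewrite inE => /orP [/xX | /xY].
move=> p /andP [pS pc] xp; apply: le_trans rad_le.
apply: le_trans (d_tri d_metric x p.1 c.1) _; rewrite lerD ?(near p) //.
exact/ltW/(greedy_block_radius cS).
Qed.
End Greedy.

Section Counting.
Variables (R : realFieldType) (V : finType) (d : V -> V -> R).
Hypothesis d_metric : is_metric d.

Lemma known_leader_near S sep rad r p q : spread_level d S sep rad ->
  p \in S -> q \in S -> knows d r p.2 q.2 -> d q.1 p.1 < 2 * rad + r.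
Proof.
move=> [_ _ near] pS qS /existsP [v /andP [vp /existsP [u /andP [uq duv]]]].
have -> : 2 * rad + r = rad + (r + rad) by rewrite mulr_natl mulr2n -addrA [rad + r]addrC.
have dqu : d q.1 u <= rad by rewrite (d_sym d_metric); apply: near.
have duv' : d u v < r by rewrite (d_sym d_metric).
apply: le_lt_trans (d_tri d_metric _ u _) (ler_ltD dqu _).
exact: le_lt_trans (d_tri d_metric _ v _) (ltr_leD duv' (near p pS v vp)).
Qed.

Variable lam : nat.
Hypothesis d_doubling : doubling d lam.

(* Packing meets covering: in a level whose leaders are (2 rho)-separated, the
   leaders of the sets known by p all lie in a ball of radius 2 rad + r around
   p's leader; if that radius is at most 2^k rho, they number at most lam^k. *)
Lemma count_known_le S rho rad r k p : spread_level d S (2 * rho) rad ->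
  0 < rho -> 2 * rad + r <= 2 ^+ k * rho -> p \in S ->
  (count (fun q : V * {set V} => knows d r p.2 q.2) S <= lam ^ k)%N.
Proof.
move=> spreadS rho_gt0 radius_le pS; have [uniqS sepS _] := spreadS.
set P := fun q : V * {set V} => knows d r p.2 q.2.
have [W [cardW coverW]] := cover_ball d_doubling k p.1 rho_gt0.
rewrite -size_filter -(size_map fst) (leq_trans _ cardW) //.
apply: (packing d_metric).
- exact: subseq_uniq (map_subseq _ (filter_subseq P S)) uniqS.
- move=> x /mapP [q]; rewrite mem_filter => /andP [knows_pq qS] ->.
  apply: coverW; apply: lt_le_trans radius_le.
  exact: known_leader_near spreadS pS qS knows_pq.
- move=> x y /mapP [q1]; rewrite mem_filter => /andP [_ q1S] ->.
  by move=> /mapP [q2]; rewrite mem_filter => /andP [_ q2S] ->; apply: sepS.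
Qed.
End Counting.

Section Hierarchy.
Variables (R : realFieldType) (V : finType) (d : V -> V -> R).
Variables (eta : nat) (tau r0 : R) (H : nat -> level V).
Hypotheses (d_metric : is_metric d) (eta_ge2 : (2 <= eta)%N).
Hypothesis tau_ge : 1 + 1 / (2 ^+ eta.-1 - 1) <= tau.
Hypotheses (r0_gt0 : 0 < r0) (r0_sep : forall u v : V, u != v -> r0 < d u v).
Hypothesis run : hier_run d eta tau r0 H.

Let scale j := tau ^+ j * r0.

(* Level j has leaders at mutual distance >= 2 r_j / 2^(eta+1) (the greedy
   radius that produced them) and sets of radius <= r_j / 2. *)
Lemma spread_hier_run j : (forall i, (i < j)%N -> (1 < size (H i))%N) ->
  spread_level d (H j) (2 * scale j / 2 ^+ eta.+1) (scale j / 2).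
Proof.
have scale_gt0 i : 0 < scale i.
  by rewrite mulr_gt0 // exprn_gt0 // (lt_trans ltr01 (tau_gt1 eta_ge2 tau_ge)).
case: run => run0 run_step; elim: j => [_ | j IH sizes].
  rewrite run0; apply: (spread_level0 d_metric); last by rewrite divr_ge0 ?ltW.
  move=> u v /r0_sep/ltW; apply: le_trans.
  rewrite /scale expr0 mul1r ler_pdivrMr ?exprn_gt0 // mulrC ler_wpM2l ?(ltW r0_gt0) //.
  by rewrite exprS ler_peMr // exprn_ege1 // ler1n.
have [s [greedy_s ->]] := run_step j (sizes j (ltnSn j)).
apply: (spread_next_level d_metric _ _ greedy_s).
- exact: IH (fun i lt_ij => sizes i (ltnW lt_ij)).
- by rewrite divr_gt0 ?exprn_gt0 // (mulr_gt0 _ (scale_gt0 j.+1)).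
- rewrite /scale exprSr !(mulrAC _ tau r0).
  exact: radius_step eta_ge2 tau_ge _ (ltW (scale_gt0 j)).
Qed.
End Hierarchy.

Theorem lemma3 (R : realFieldType) (V : finType) (d : V -> V -> R)
  (lam eta : nat) (tau r0 : R) (H : nat -> level V) :
  is_metric d ->
  (2 <= #|V|)%N ->
  doubling d lam ->
  (2 <= eta)%N ->
  1 + 1 / (2 ^+ eta.-1 - 1) <= tau -> tau <= 2 ^+ eta ->
  0 < r0 -> (forall u v : V, u != v -> r0 < d u v) ->
  hier_run d eta tau r0 H ->
  forall j : nat, (forall i : nat, (i < j)%N -> (1 < size (H i))%N) ->
  forall p, p \in H j ->
    (count (fun q : V * {set V} => knows d (tau ^+ j * r0) p.2 q.2) (H j)
       <= lam ^ (3 + eta))%N.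
Proof.
move=> d_metric _ d_doubling eta_ge2 tau_ge _ r0_gt0 r0_sep run j sizes p pH.
have := spread_hier_run d_metric eta_ge2 tau_ge r0_gt0 r0_sep run sizes.
set a := tau ^+ j * r0; set rho := a / 2 ^+ eta.+1; rewrite -mulrA => spread.
have a_gt0 : 0 < a.
  by rewrite mulr_gt0 // exprn_gt0 // (lt_trans ltr01 (tau_gt1 eta_ge2 tau_ge)).
have rho_gt0 : 0 < rho by rewrite divr_gt0 ?exprn_gt0.
(* The known leaders lie within 2a = 2^(eta+2) rho of p's leader. *)
have radius : 2 * (a / 2) + a <= 2 ^+ eta.+2 * rho.
  rewrite /rho exprS -mulrA [2 ^+ eta.+1 * _]mulrC divfK ?gt_eqF ?exprn_gt0 //.
  lra.
apply: leq_trans (count_known_le d_metric d_doubling spread rho_gt0 radius pH) _.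
by case: lam {d_doubling} => [|l]; rewrite ?exp0n // leq_pexp2l // addnC.
Qed.
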